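(* Let $H=(V,f)$ be a separated labeled hypergraph with connected 1-skeleton. Suppose $H$ is 2-solvable (modulo some prime $p$), and that, for the corresponding red/blue 2-coloring, $H$ has a simple edge containing a different number of red vertices than blue vertices. Then $\mathcal A[H]\neq k[H]$.
   Context: Let $k$ be a field and $S=k[x_1,\dots,x_n,y]$. For an integral convex polytope $\mathcal P\subseteq\mathbb R^n_{\ge 0}$, the Ehrhart ring $\mathcal A[\mathcal P]$ is the $k$-subspace of $S$ spanned by the monomials $x^{\mathbf a}y^t$ with $t\in\mathbb N$, $\mathbf a\in t\mathcal P\cap\mathbb Z^n$; the polytopal ring is $k[\mathcal P]=k[x^{\mathbf a}y:\mathbf a\in\mathcal P\cap\mathbb Z^n]$. A labeled hypergraph $H=(V,f)$ on a finite set $V$ with alphabet $\{x_1,\dots,x_n\}$ is a function $f:\{x_1,\dots,x_n\}\to\mathcal P(V)$; its edges are the nonempty sets in the image of $f$. $H$ is separated if for all distinct $v,w\in V$ there are edges $F,G$ with $v\in F\setminus G$, $w\in G\setminus F$. For separated $H$, let $x^{\mathbf a_v}=\prod_{x:\,v\in f(x)}x$ for $v\in V$, $\mathcal P_H=\mathrm{conv}\{\mathbf a_v:v\in V\}$, $\mathcal A[H]=\mathcal A[\mathcal P_H]$, $k[H]=k[\mathcal P_H]$. An edge is simple if no other edge of $H$ is a proper subset of it. The 1-skeleton of $H$ is the simple graph on $V$ whose edges are the edges of $H$ with exactly two vertices. For a prime $p$, $H$ is 2-solvable modulo $p$ if there is a proper 2-coloring of the 1-skeleton of $H$ by colors red and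 blue (adjacent vertices get different colors, every vertex of $V$ colored) such that for every edge $E$ of $H$, and also for $E=V$, the numbers $r_E$ and $b_E$ of red and blue vertices in $E$ satisfy $r_E-b_E\equiv 0\pmod p$. $H$ is 2-solvable if it is 2-solvable modulo some prime $p$. *)

From HB Require Import structures.
From mathcomp Require Import all_boot all_order all_algebra.
Set Implicit Arguments. Unset Strict Implicit. Unset Printing Implicit Defensive.
Import Order.TTheory GRing.Theory Num.Theory.

(* Exponent of a monomial x^a y^t in S = k[x_1..x_n, y]: the pair (a, t). *)
Definition expo (n : nat) : eqType := (n.-tuple nat * nat)%type.

Definition tsum (n : nat) (s : seq (n.-tuple nat)) : n.-tuple nat :=
  [tuple \sum_(b <- s) tnth b i | i < n].

(* a \in t * conv(pts), for pts : I -> N^n (I a finite index type).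
   Convex combinations are taken with rational coefficients (the points are
   integral, so this is the same as with real coefficients). *)
Definition in_dilate (n : nat) (I : finType) (pts : I -> n.-tuple nat)
    (t : nat) (a : n.-tuple nat) : Prop :=
  exists lam : I -> rat,
    (forall v, (0 <= lam v)%R) /\
    (\sum_(v : I) lam v)%R = (t%:R)%R /\
    forall i : 'I_n, ((tnth a i)%:R : rat) = (\sum_(v : I) lam v * (tnth (pts v) i)%:R)%R.

Definition lattice_pt (n : nat) (I : finType) (pts : I -> n.-tuple nat)
    (b : n.-tuple nat) : Prop := in_dilate pts 1 b.

(* Monomials of the Ehrhart ring A[P]: x^a y^t with a in tP ∩ Z^n. *)
Definition ehrhart_mon (n : nat) (I : finType) (pts : I -> n.-tuple nat)
    (e : expo n) : Prop := in_dilate pts e.2 e.1.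

(* Monomials of k[P]: products of t generators x^b y, b in P ∩ Z^n. *)
Definition polytopal_mon (n : nat) (I : finType) (pts : I -> n.-tuple nat)
    (e : expo n) : Prop :=
  exists s : seq (n.-tuple nat),
    size s = e.2 /\ (forall b, b \in s -> lattice_pt pts b) /\ tsum s = e.1.

(* Elements of S = k[x_1..x_n,y]: finitely supported coefficient functions
   on exponents. *)
Definition fin_supp (k : fieldType) (n : nat) (F : expo n -> k) : Prop :=
  exists s : seq (expo n), forall e, F e != 0%R -> e \in s.

Definition mon_span (k : fieldType) (n : nat) (M : expo n -> Prop)
    (F : expo n -> k) : Prop :=
  fin_supp F /\ forall e, F e != 0%R -> M e.

(* A[P] and k[P] as subsets of S.  k[P] is the k-subalgebra generated by the
   x^b y (b in P ∩ Z^n), i.e. the k-span of all products of these generators. *)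
Definition ehrhart_ring (k : fieldType) (n : nat) (I : finType)
    (pts : I -> n.-tuple nat) : (expo n -> k) -> Prop :=
  @mon_span k n (ehrhart_mon pts).
Definition polytopal_ring (k : fieldType) (n : nat) (I : finType)
    (pts : I -> n.-tuple nat) : (expo n -> k) -> Prop :=
  @mon_span k n (polytopal_mon pts).

(* H = (V, f) with V : finType, alphabet {x_1..x_n} = 'I_n, f : 'I_n -> {set V}. *)

Definition is_edge (V : finType) (n : nat) (f : 'I_n -> {set V}) (E : {set V}) : Prop :=
  E != set0 /\ exists x : 'I_n, f x = E.

Definition separated (V : finType) (n : nat) (f : 'I_n -> {set V}) : Prop :=
  forall v w : V, v != w ->
    exists F G, is_edge f F /\ is_edge f G /\
      v \in F /\ v \notin G /\ w \in G /\ w \notin F.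

Definition avec (V : finType) (n : nat) (f : 'I_n -> {set V}) (v : V) : n.-tuple nat :=
  [tuple nat_of_bool (v \in f i) | i < n].

Definition A_H (k : fieldType) (V : finType) (n : nat) (f : 'I_n -> {set V}) :=
  @ehrhart_ring k n V (avec f).
Definition k_H (k : fieldType) (V : finType) (n : nat) (f : 'I_n -> {set V}) :=
  @polytopal_ring k n V (avec f).

Definition simple_edge (V : finType) (n : nat) (f : 'I_n -> {set V}) (E : {set V}) : Prop :=
  is_edge f E /\ forall G, is_edge f G -> ~ (G \proper E).

Definition skel_adj (V : finType) (n : nat) (f : 'I_n -> {set V}) (v w : V) : Prop :=
  v != w /\ is_edge f [set v; w].

Inductive skel_reach (V : finType) (n : nat) (f : 'I_n -> {set V}) : V -> V -> Prop :=
  | sr_refl v : skel_reach f v v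
  | sr_step u v w : skel_adj f u v -> skel_reach f v w -> skel_reach f u w.

Definition skel_connected (V : finType) (n : nat) (f : 'I_n -> {set V}) : Prop :=
  forall v w : V, skel_reach f v w.

(* colouring: col v = true means red, false means blue *)
Definition reds (V : finType) (col : V -> bool) (E : {set V}) : nat :=
  #|[set v in E | col v]|.
Definition blues (V : finType) (col : V -> bool) (E : {set V}) : nat :=
  #|[set v in E | ~~ col v]|.

Definition two_solution (V : finType) (n : nat) (f : 'I_n -> {set V})
    (p : nat) (col : V -> bool) : Prop :=
  (forall v w, skel_adj f v w -> col v != col w) /\
  (forall E, is_edge f E -> reds col E = blues col E %[mod p]) /\
  reds col [set: V] = blues col [set: V] %[mod p].

(* Weight every red vertex by (p+1)/p and every blue one by (p-1)/p.  As
   p+1 = 1 and p-1 = -1 modulo p, the congruences r_E = b_E (mod p) make the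
   combination a = \sum_v lambda_v a_v and its degree t = \sum_v lambda_v
   integral, so x^a y^t lies in A[H] ([balanced_point_ehrhart]).  The lattice
   points of P_H are its vertices ([lattice_pt_vertex]), so a monomial of k[H]
   has exponent \sum_v m_v a_v with m_v in N ([polytopal_mon_vertices]).  If
   x^a y^t were in k[H], every 2-element edge {v, w} of the 1-skeleton would
   force m_v + m_w = 2 ([mult_adj]); by connectivity m_v = c on red and 2 - c
   on blue vertices ([mult_by_colour]).  Evaluating on the unbalanced edge
   gives ((c - 1) p - 1)(r_E - b_E) = 0, impossible for p > 1
   ([balanced_count]). *)

From HB Require Import structures.
From mathcomp Require Import all_boot all_order all_algebra.
From mathcomp Require Import zify ring.
Set Implicit Arguments. Unset Strict Implicit. Unset Printing Implicit Defensive.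
Import Order.TTheory GRing.Theory Num.Theory.

Section Vertices.
Variables (V : finType) (n : nat) (f : 'I_n -> {set V}).

Lemma avec_coord (R : pzSemiRingType) (lam : V -> R) (i : 'I_n) :
  (\sum_v lam v * (tnth (avec f v) i)%:R = \sum_(v in f i) lam v)%R.
Proof.
rewrite [RHS]big_mkcond; apply: eq_bigr => v _.
by rewrite tnth_mktuple; case: (v \in f i); rewrite ?mulr1 ?mulr0.
Qed.

(* The only lattice points of P_H are its vertices a_v: a convex combination
   of 0/1-vectors which is integral coincides with every vertex it charges. *)
Lemma lattice_pt_vertex (b : n.-tuple nat) :
  lattice_pt (avec f) b -> exists u, b = avec f u.
Proof.
move=> [lam [lam_ge0 [lam_sum1 b_coord]]]; rewrite mulr1n in lam_sum1.
have [u /andP[_ lam_u_gt0]] : exists u, true && (0 < lam u)%R.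
  by apply: psumr_neq0P => //; rewrite lam_sum1; exact/eqP/oner_neq0.
exists u; apply: eq_from_tnth => i; rewrite tnth_mktuple.
have b_edge : ((tnth b i)%:R = \sum_(v in f i) lam v :> rat)%R.
  by rewrite b_coord avec_coord.
have b_compl : (1 - (tnth b i)%:R = \sum_(v in ~: f i) lam v :> rat)%R.
  rewrite b_edge -lam_sum1 (bigID (mem (f i))) /= addrAC subrr add0r.
  by apply: eq_bigl => v; rewrite inE.
have part_ge (A : {set V}) : u \in A -> (lam u <= \sum_(v in A) lam v)%R.
  by move=> uA; rewrite (bigD1 u) //= lerDl sumr_ge0.
have Hle1 : ((tnth b i)%:R <= 1 :> rat)%R.
  by rewrite -subr_ge0 b_compl sumr_ge0.
case: (boolP (u \in f i)) => ui /=.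
- have : (0 < (tnth b i)%:R :> rat)%R by rewrite b_edge (lt_le_trans _ (part_ge _ ui)).
  by move: Hle1; rewrite lern1 ltr0n; lia.
- have : (0 < 1 - (tnth b i)%:R :> rat)%R.
    by rewrite b_compl (lt_le_trans _ (part_ge (~: f i) _)) // inE.
  by rewrite subr_gt0 ltrn1; lia.
Qed.

Lemma sum_indicator (A : {set V}) (u : V) :
  \sum_(x in A) ((x == u) : nat) = (u \in A).
Proof.
case: (boolP (u \in A)) => uA; last first.
  by rewrite big1 // => x xA; case: eqP => // xu; rewrite -xu xA in uA.
rewrite (bigD1 u) //= eqxx big1 ?addn0 // => x /andP[_ /negbTE -> //].
Qed.

Lemma sum_lattice_pts (s : seq (n.-tuple nat)) :
  (forall b, b \in s -> lattice_pt (avec f) b) ->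
  exists m : V -> nat, forall i, \sum_(b <- s) tnth b i = \sum_(x in f i) m x.
Proof.
elim: s => [|b s IH] s_lat.
  by exists (fun=> 0) => i; rewrite big_nil big1.
have [u ->] := lattice_pt_vertex (s_lat b (mem_head b s)).
have [m m_sum] : exists m : V -> nat,
    forall i, \sum_(c <- s) tnth c i = \sum_(x in f i) m x.
  by apply: IH => c cs; apply: s_lat; rewrite inE cs orbT.
exists (fun x => (x == u) + m x) => i.
by rewrite big_cons m_sum big_split /= sum_indicator tnth_mktuple.
Qed.

Lemma polytopal_mon_vertices (e : expo n) :
  polytopal_mon (avec f) e ->
  exists m : V -> nat, forall i, tnth e.1 i = \sum_(x in f i) m x.
Proof.
move=> [s [_ [s_lat <-]]]; have [m m_sum] := sum_lattice_pts s_lat.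
by exists m => i; rewrite tnth_mktuple.
Qed.

Lemma skel_reach_const (T : Type) (g : V -> T) :
  (forall v w, skel_adj f v w -> g v = g w) ->
  forall v w, skel_reach f v w -> g v = g w.
Proof. by move=> g_adj v w; elim=> // u x y /g_adj -> _. Qed.

End Vertices.

Lemma mon_span_single (k : fieldType) (n : nat) (M : expo n -> Prop) (e : expo n) :
  mon_span M (fun e' => if e' == e then 1%R else 0%R : k) <-> M e.
Proof.
split=> [[_ supp_M] | Me]; first by apply: supp_M; rewrite eqxx oner_neq0.
split; first by exists [:: e] => e' /=; case: (eqVneq e' e) => [-> _|_]; rewrite ?mem_head ?eqxx.
by move=> e' /=; case: (eqVneq e' e) => [-> //|_]; rewrite eqxx.
Qed.

Section Colouring.
Variables (V : finType) (col : V -> bool).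

Lemma sum_by_colour (R : nmodType) (a b : R) (A : {set V}) :
  (\sum_(x in A) (if col x then a else b) = a *+ reds col A + b *+ blues col A)%R.
Proof.
rewrite (bigID col) /= -!sumr_const.
congr (_ + _)%R; rewrite big_mkcond [RHS]big_mkcond; apply: eq_bigr => x _;
  by rewrite !inE; case: (x \in A); case: (col x).
Qed.

Variable p : nat.

(* p times the total weight of A when red vertices weigh (p+1)/p and blue
   vertices (p-1)/p. *)
Definition colour_weight (A : {set V}) : nat :=
  p.+1 * reds col A + p.-1 * blues col A.

Definition vertex_weight (v : V) : rat :=
  (if col v then p.+1%:R / p%:R else p.-1%:R / p%:R)%R.

Lemma sum_vertex_weight (A : {set V}) :
  (\sum_(v in A) vertex_weight v = (colour_weight A)%:R / p%:R)%R.
Proof.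
rewrite /vertex_weight (sum_by_colour (R := rat)).
rewrite -[(_ *+ reds _ _)%R]mulr_natr -[(_ *+ blues _ _)%R]mulr_natr.
rewrite /colour_weight natrD !natrM mulrDl.
by congr (_ + _)%R; rewrite mulrAC.
Qed.

(* Since p+1 = 1 and p-1 = -1 modulo p, a set with as many red as blue
   vertices modulo p has weight divisible by p. *)
Lemma colour_weight_dvd (A : {set V}) :
  0 < p -> reds col A = blues col A %[mod p] -> p %| colour_weight A.
Proof.
move=> p_gt0 rb.
have shifted : colour_weight A + blues col A = (reds col A + blues col A) * p + reds col A.
  by rewrite /colour_weight -addnA -mulSnr prednK //; ring.
apply/eqP; rewrite -(mod0n p); apply/eqP.
by rewrite -(eqn_modDr (blues col A)) shifted modnMDl add0n rb.
Qed.

Lemma colour_weight_sum (A : {set V}) :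
  colour_weight A = \sum_(x in A) (if col x then p.+1 else p.-1).
Proof.
rewrite (sum_by_colour (R := nat)).
by rewrite -[(_ *+ reds _ _)%R]mulr_natr -[(_ *+ blues _ _)%R]mulr_natr !natn.
Qed.

End Colouring.

Lemma two_solution_mod (V : finType) (n : nat) (f : 'I_n -> {set V}) (p : nat)
    (col : V -> bool) :
  two_solution f p col -> forall i, reds col (f i) = blues col (f i) %[mod p].
Proof.
move=> [_ [edges_bal _]] i; case: (eqVneq (f i) set0) => [-> | fi_ne0].
  by rewrite /reds /blues !(eq_card0 (A := [set _ in set0 | _])) // => x; rewrite !inE.
by apply: edges_bal; split=> //; exists i.
Qed.

(* The arithmetic heart of the argument: if the vertices of an edge with R
   red and B blue vertices carry multiplicities c (red) and 2 - c (blue), and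
   these reproduce p times the weighted count (p+1)R + (p-1)B, then R = B,
   because (c - 1) p = 1 is impossible for p > 1. *)
Lemma balanced_count (p R B : nat) (c : int) : 1 < p ->
  ((c * R%:Z + (2 - c) * B%:Z) * p%:Z = (p.+1 * R + p.-1 * B)%N%:Z)%R -> R = B.
Proof.
move=> p_gt1 eq_count.
have cast_rhs : ((p.+1 * R + p.-1 * B)%N%:Z = (p%:Z + 1) * R%:Z + (p%:Z - 1) * B%:Z)%R.
  by rewrite -(prednK (ltnW p_gt1)) !PoszD !PoszM /=; ring.
have : (((c - 1) * p%:Z - 1) * (R%:Z - B%:Z) =
        (c * R%:Z + (2 - c) * B%:Z) * p%:Z - (p.+1 * R + p.-1 * B)%N%:Z)%R.
  by rewrite cast_rhs; ring.
rewrite eq_count subrr => /eqP; rewrite mulf_eq0 => /orP[/eqP cp1 | ].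
- by exfalso; case: (lerP c 1) => c1; nia.
- by rewrite subr_eq0 eqz_nat => /eqP.
Qed.

Section BalancedPoint.
Variables (V : finType) (n : nat) (f : 'I_n -> {set V}) (col : V -> bool) (p : nat).
Local Notation W := (colour_weight col p).

(* The exponent (a, t) with a = \sum_v lambda_v a_v and t = \sum_v lambda_v,
   where lambda_v = (p+1)/p on red and (p-1)/p on blue vertices. *)
Definition balanced_point : expo n :=
  ([tuple W (f i) %/ p | i < n], W [set: V] %/ p).

Lemma balanced_point_ehrhart :
  (forall i, p %| W (f i)) -> p %| W [set: V] -> ehrhart_mon (avec f) balanced_point.
Proof.
move=> W_dvd WT_dvd; exists (vertex_weight col p); split.
  by move=> v; rewrite /vertex_weight; case: (col v); rewrite divr_ge0 ?ler0n.
split=> [|i].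
  rewrite /= natf_div // -sum_vertex_weight; by apply: eq_bigl => v; rewrite inE.
by rewrite /= tnth_mktuple natf_div // -sum_vertex_weight avec_coord.
Qed.

Hypothesis p_gt0 : 0 < p.
Hypothesis W_dvd : forall i, p %| W (f i).
Hypothesis col_proper : forall v w, skel_adj f v w -> col v != col w.

Variable m : V -> nat.
Hypothesis m_coord : forall i, tnth balanced_point.1 i = \sum_(x in f i) m x.

Lemma mult_edge i : (\sum_(x in f i) m x) * p = W (f i).
Proof. by rewrite -m_coord tnth_mktuple divnK. Qed.

(* Across a 2-element edge {v, w} the weight is (p+1) + (p-1) = 2p, so the
   multiplicities of v and w add up to 2. *)
Lemma mult_adj v w : skel_adj f v w -> m v + m w = 2.
Proof.
move=> adj_vw; have vw_col := col_proper adj_vw.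
case: adj_vw => v_ne_w [_ [i fi]]; have := mult_edge i.
rewrite fi colour_weight_sum !big_setU1 ?big_set1 ?inE //=.
have -> : (if col v then p.+1 else p.-1) + (if col w then p.+1 else p.-1) = 2 * p.
  by move: vw_col; case: (col v); case: (col w) => //= _; lia.
by move/eqP; rewrite eqn_pmul2r // => /eqP.
Qed.

Definition red_mult (x : V) : int :=
  (if col x then (m x)%:Z else 2 - (m x)%:Z)%R.

Lemma red_mult_adj v w : skel_adj f v w -> red_mult v = red_mult w.
Proof.
move=> adj_vw; have := mult_adj adj_vw; move: (col_proper adj_vw).
by rewrite /red_mult; case: (col v); case: (col w) => //= _; lia.
Qed.

Lemma mult_by_colour (v0 : V) : skel_connected f ->
  forall x, ((m x)%:Z = if col x then red_mult v0 else 2 - red_mult v0)%R.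
Proof.
move=> conn x; rewrite (skel_reach_const red_mult_adj (conn v0 x)) /red_mult.
by case: (col x) => //; rewrite opprB addrC subrK.
Qed.

Lemma mult_edge_count (v0 : V) i : skel_connected f ->
  ((red_mult v0 * (reds col (f i))%:Z + (2 - red_mult v0) * (blues col (f i))%:Z)
     * p%:Z = (W (f i))%:Z)%R.
Proof.
move=> conn; rewrite -mult_edge PoszM; congr (_ * _)%R.
rewrite (big_morph Posz PoszD (erefl (Posz 0))).
rewrite (eq_bigr _ (fun x _ => mult_by_colour v0 conn x)) sum_by_colour.
by rewrite -[(_ *+ reds _ _)%R]mulr_natr -[(_ *+ blues _ _)%R]mulr_natr !natz.
Qed.

End BalancedPoint.

Theorem theorem4p6 (k : fieldType) (V : finType) (n : nat) (f : 'I_n -> {set V})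
  (p : nat) (col : V -> bool) :
  separated f ->
  skel_connected f ->
  prime p ->
  two_solution f p col ->
  (exists E, simple_edge f E /\ reds col E <> blues col E) ->
  ~ (forall F : expo n -> k, A_H f F <-> k_H f F).
Proof.
move=> _ conn p_prime sol [E [[[E_ne0 [i0 fi0]] _] unbalanced] A_eq_k].
have p_gt1 := prime_gt1 p_prime; have p_gt0 := ltnW p_gt1.
have W_dvd i : p %| colour_weight col p (f i).
  by apply: colour_weight_dvd => //; exact: two_solution_mod.
have WT_dvd : p %| colour_weight col p [set: V].
  exact: colour_weight_dvd p_gt0 sol.2.2.
have in_kH : polytopal_mon (avec f) (balanced_point f col p).
  apply/(mon_span_single k)/A_eq_k/mon_span_single.
  exact: balanced_point_ehrhart.
have [m m_coord] := polytopal_mon_vertices in_kH.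
case/set0Pn: E_ne0 => v0 _.
apply: unbalanced; apply: (balanced_count (c := red_mult col m v0) p_gt1).
by rewrite -fi0 (mult_edge_count p_gt0 W_dvd sol.1 m_coord v0 i0 conn).
Qed.
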